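(* Let ${}^{+}Q^H_k(x)$ be the coefficient polynomials of the linear transformation $x^n\mapsto H_n(x)$ and ${}^{-}Q^H_k(x)$ the coefficient polynomials of the linear transformation $x^n\mapsto H_n(-x)$ on $\mathbb{R}[x]$. Then for all $k\ge0$, ${}^{-}Q^H_k(x)={}^{+}Q^H_k(-3x)$.
   Context: $H_n$ denotes the $n$th physicist Hermite polynomial, $H_n(x)=n!\sum_{m=0}^{\lfloor n/2\rfloor}\frac{(-1)^m}{m!(n-2m)!}(2x)^{n-2m}$. Every linear operator $T\colon\mathbb{C}[x]\to\mathbb{C}[x]$ has a unique representation $T=\sum_{k=0}^\infty \frac{Q_k(x)}{k!}D^k$ with $D=d/dx$ and polynomials $Q_k(x)$, called the coefficient polynomials of $T$. *)

From HB Require Import structures.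
From mathcomp Require Import all_boot all_order all_algebra.
Set Implicit Arguments. Unset Strict Implicit. Unset Printing Implicit Defensive.
Import Order.TTheory GRing.Theory Num.Theory.
Local Open Scope ring_scope.

Definition hermite (R : realFieldType) (n : nat) : {poly R} :=
  \sum_(m < n./2.+1)
     ((n`!)%:R / ((m`!)%:R * ((n - 2 * m)`!)%:R) * (-1) ^+ m)
       *: ((2%:R *: 'X) ^+ (n - 2 * m)).

Definition Tplus (R : realFieldType) (p : {poly R}) : {poly R} :=
  \sum_(i < size p) p`_i *: hermite R i.

Definition Tminus (R : realFieldType) (p : {poly R}) : {poly R} :=
  \sum_(i < size p) p`_i *: (hermite R i \Po (- 'X)).

(* Q is the sequence of coefficient polynomials of T :
   T = sum_{k>=0} Q_k(x)/k! D^k, i.e. for every polynomial p,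
   T p = sum_k Q_k * p^(k) / k!  (the sum is finite: p^(k) = 0 for k >= size p). *)
Definition coeff_polys (R : realFieldType) (T : {poly R} -> {poly R})
    (Q : nat -> {poly R}) : Prop :=
  forall p : {poly R},
    T p = \sum_(k < size p) ((k`!)%:R)^-1 *: (Q k * p^`(k)).

From HB Require Import structures.
From mathcomp Require Import all_boot all_order all_algebra.
From mathcomp Require Import ring zify.
Set Implicit Arguments. Unset Strict Implicit. Unset Printing Implicit Defensive.
Import Order.TTheory GRing.Theory Num.Theory.
Local Open Scope ring_scope.

(* Write H_n(x) = G_n(2x), where G_n(x) = H_n(x/2) is [hermite_half n].  The G_n
   form an Appell sequence, G_(n+1)' = (n+1) G_n, so Taylor expansion gives
   G_n(a + x) = sum_k C(n,k) G_k(a) x^(n-k).  An operator mapping x^n to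
   sum_k C(n,k) Q_k x^(n-k) has coefficient polynomials Q_k, because p |-> p^(k)/k!
   maps x^n to C(n,k) x^(n-k); and coefficient polynomials are unique (test the
   operator on x^k).  With a = x this gives +Q_k = G_k(x), and since
   H_n(-x) = G_n(-2x) = G_n(-3x + x), with a = -3x it gives -Q_k = G_k(-3x). *)

Lemma natr_fact_neq0 (R : numDomainType) (k : nat) : k`!%:R != 0 :> R.
Proof. by rewrite pnatr_eq0 -lt0n fact_gt0. Qed.

Section CoeffPolys.
Variable R : realFieldType.

Lemma coeff_polys_unique (T : {poly R} -> {poly R}) (Q1 Q2 : nat -> {poly R}) :
  coeff_polys T Q1 -> coeff_polys T Q2 -> Q1 =1 Q2.
Proof.
move=> TQ1 TQ2; elim/ltn_ind => k IHk.
have := TQ1 'X^k; rewrite TQ2 size_polyXn !big_ord_recr /=.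
under eq_bigr => i _ do rewrite -IHk //.
move/addrI; rewrite derivnXn subnn ffactnn expr0 !mulr_natr -!scaler_nat.
by rewrite !scalerA mulVf ?(natr_fact_neq0 R) // !scale1r => ->.
Qed.

Lemma coeff_polys_binomial (T : {poly R} -> {poly R}) (f Q : nat -> {poly R}) :
  (forall p, T p = \sum_(i < size p) p`_i *: f i) ->
  (forall n, f n = \sum_(k < n.+1) 'C(n, k)%:R *: (Q k * 'X^(n - k))) ->
  coeff_polys T Q.
Proof.
move=> Tf fQ p; rewrite Tf.
have derivnE k :
    (k`!%:R)^-1 *: p^`(k) = \sum_(i < size p) p`_i *: ('X^(i - k) *+ 'C(i, k)).
  rewrite nderivn_def -scaler_nat scalerA mulVf ?(natr_fact_neq0 R) // scale1r.
  rewrite -{1}(coefK p) poly_def linear_sum /=.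
  by apply: eq_bigr => i _; rewrite linearZ /= nderivnXn.
under [RHS]eq_bigr => k _ do rewrite scalerAr derivnE mulr_sumr.
rewrite exchange_big /=; apply: eq_bigr => i _.
rewrite fQ (big_ord_widen (size p) (fun k => 'C(i, k)%:R *: (Q k * 'X^(i - k)))) //.
rewrite big_mkcond scaler_sumr; apply: eq_bigr => k _ /=.
rewrite ltnS; case: leqP => [_|/bin_small->]; last first.
  by rewrite !(mulr0n, scaler0, mulr0).
by rewrite -scaler_nat !scalerAr.
Qed.

End CoeffPolys.

Section Appell.
Variable R : numFieldType.
Implicit Type f : nat -> {poly R}.

Definition appell f := forall n, (f n.+1)^`() = n.+1%:R *: f n.

Lemma appell_derivn f n i : appell f -> (i <= n)%N ->
  (f n)^`(i) = (n ^_ i)%N%:R *: f (n - i)%N.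
Proof.
move=> fA; elim: i => [|i IHi] lt_in; first by rewrite derivn0 ffactn0 scale1r subn0.
rewrite derivnS IHi 1?ltnW // derivZ -(subnSK lt_in) fA scalerA -natrM.
by rewrite ffactnSr subnSK.
Qed.

Lemma appell_nderivn f n i : appell f -> (i <= n)%N ->
  (f n)^`N(i) = 'C(n, i)%:R *: f (n - i)%N.
Proof.
move=> fA le_in; apply: (scalerI (natr_fact_neq0 R i)).
by rewrite [LHS]scaler_nat -nderivn_def appell_derivn // scalerA -natrM -bin_ffact mulnC.
Qed.

Lemma appell_comp_addX f :
  appell f -> (forall m, (size (f m) <= m.+1)%N) -> forall (a : {poly R}) n,
  f n \Po (a + 'X) = \sum_(k < n.+1) 'C(n, k)%:R *: ((f k \Po a) * 'X^(n - k)).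
Proof.
move=> fA size_f a n.
rewrite {1}/comp_poly (nderiv_taylor_wide (n := n.+1)) ?size_map_polyC //;
  last exact: mulrC.
rewrite (reindex_inj rev_ord_inj) /=; apply: eq_bigr => k _.
have le_kn : (k <= n)%N by rewrite -ltnS.
rewrite subSS nderivn_map appell_nderivn ?leq_subr // subKn // bin_sub //.
by rewrite -/(comp_poly a _) comp_polyZ scalerAl.
Qed.

End Appell.

Section HermiteHalf.
Variable R : realFieldType.

Definition hermite_coef (n m : nat) : R :=
  n`!%:R / (m`!%:R * (n - 2 * m)`!%:R) * (-1) ^+ m.

Definition hermite_half (n : nat) : {poly R} :=
  \sum_(m < n./2.+1) hermite_coef n m *: 'X^(n - 2 * m).

Lemma hermite_halfE n : hermite R n = hermite_half n \Po ('X + 'X).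
Proof.
rewrite /hermite /hermite_half linear_sum; apply: eq_bigr => m _.
by rewrite linearZ /= comp_Xn_poly scaler_nat mulr2n.
Qed.

Lemma size_hermite_half n : (size (hermite_half n) <= n.+1)%N.
Proof.
rewrite (leq_trans (size_sum _ _ _)) //; apply/bigmax_leqP => m _.
by rewrite (leq_trans (size_scale_leq _ _)) // size_polyXn ltnS leq_subr.
Qed.

Lemma hermite_coefS n m : (2 * m <= n)%N ->
  hermite_coef n.+1 m * (n.+1 - 2 * m)%:R = n.+1%:R * hermite_coef n m.
Proof.
move=> le_2m_n; rewrite /hermite_coef subSn // !factS !natrM.
by field; rewrite !natr_fact_neq0 nat1r pnatr_eq0.
Qed.

Lemma appell_hermite_half : appell hermite_half.
Proof.
move=> n; rewrite /hermite_half linear_sum scaler_sumr /=.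
rewrite (big_ord_widen n.+2
  (fun m => (hermite_coef n.+1 m *: 'X^(n.+1 - 2 * m))^`())); last lia.
rewrite (big_ord_widen n.+2
  (fun m => n.+1%:R *: (hermite_coef n m *: 'X^(n - 2 * m)))); last lia.
rewrite big_mkcond [RHS]big_mkcond; apply: eq_bigr => m _ /=.
rewrite derivZ derivXn.
case: (ltngtP (2 * m) n.+1) => [lt_2m_n | gt_2m_n | eq_2m_n].
- have [-> ->] : ((m < (uphalf n).+1) /\ (m < n./2.+1))%N by lia.
  by rewrite -scaler_nat !scalerA (hermite_coefS lt_2m_n) subSn.
- by rewrite !ifN //; lia.
- by rewrite eq_2m_n subnn mulr0n scaler0 if_same ifN //; lia.
Qed.

Lemma hermite_half_comp_addX (a : {poly R}) n :
  hermite_half n \Po (a + 'X) =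
    \sum_(k < n.+1) 'C(n, k)%:R *: ((hermite_half k \Po a) * 'X^(n - k)).
Proof. exact: (appell_comp_addX appell_hermite_half size_hermite_half). Qed.

End HermiteHalf.

Lemma coeff_polys_Tplus (R : realFieldType) :
  coeff_polys (@Tplus R) (@hermite_half R).
Proof.
apply: (coeff_polys_binomial (f := hermite R)) => // n.
rewrite hermite_halfE hermite_half_comp_addX.
by apply: eq_bigr => k _; rewrite comp_polyXr.
Qed.

Lemma coeff_polys_Tminus (R : realFieldType) :
  coeff_polys (@Tminus R) (fun k => hermite_half R k \Po - (3%:R *: 'X)).
Proof.
apply: (coeff_polys_binomial (f := fun n => hermite R n \Po - 'X)) => // n.
have comp_2X_oppX : ('X + 'X) \Po - 'X = - (3%:R *: 'X) + 'X :> {poly R}.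
  by rewrite comp_polyD comp_polyX scaler_nat; ring.
by rewrite hermite_halfE -comp_polyA comp_2X_oppX hermite_half_comp_addX.
Qed.

Theorem corollary4p2 (R : realFieldType) :
  (exists Qp : nat -> {poly R}, coeff_polys (@Tplus R) Qp) /\
  (exists Qm : nat -> {poly R}, coeff_polys (@Tminus R) Qm) /\
  (forall Qp Qm : nat -> {poly R},
     coeff_polys (@Tplus R) Qp -> coeff_polys (@Tminus R) Qm ->
     forall k : nat, Qm k = Qp k \Po (- (3%:R *: 'X))).
Proof.
split; first by eexists; exact: coeff_polys_Tplus.
split; first by eexists; exact: coeff_polys_Tminus.
move=> Qp Qm TQp TQm k.
by rewrite (coeff_polys_unique TQp (@coeff_polys_Tplus R))
  (coeff_polys_unique TQm (@coeff_polys_Tminus R)).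
Qed.
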